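(* Let $A$ be a finite-dimensional associative algebra over $K=\mathbb{R}$ or $\mathbb{C}$ with unit $u$, and let $\{\cdot,\cdot\}$ be a quadratic Poisson bracket on $A$ compatible with its multiplication, with dual map $\delta\colon\mathrm{Symm}(A\otimes A)\to A\wedge A$. Then the map $\Delta\colon A\to A\wedge A$, $\Delta(x)=\delta(x\otimes u+u\otimes x)$, is a cocommutator making the Lie algebra $A_L$ into a Lie bialgebra.
   Context: $A_L$ denotes the Lie algebra on the vector space $A$ with bracket $[a,b]=ab-ba$. A quadratic Poisson bracket on $A$ is a Poisson bracket on $C^\infty(A)$ such that the bracket of two linear functions is a homogeneous quadratic function; it is encoded by $\delta^*\colon A^*\wedge A^*\to\mathrm{Sym}^2(A^* )$, $\delta^*(\xi\wedge\eta)=\{\xi,\eta\}$, and $\delta$ is its dual map (identifying $\mathrm{Symm}(A\otimes A)$, the symmetric tensors, with $(\mathrm{Sym}^2A^* )^*$ and $A\wedge A$, the skew-symmetric tensors in $A\otimes A$, with $(A^*\wedge A^* )^*$). Compatibility with the multiplication means that the multiplication map $A\times A\to A$ is a Poisson map when $A\times A$ carries the product Poisson structure. A Lie bialgebra structure on a Lie algebra $L$ is a linear map $\Delta\colon L\to L\wedge L$ which is a 1-cocycle with respect to the adjoint action and whose dual $\Delta^*\colon L^*\wedge L^*\to L^*$ is a Lie bracket. *)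

From HB Require Import structures.
From mathcomp Require Import all_boot all_order all_algebra.
From mathcomp Require Import reals.
From mathcomp Require Import complex.
Set Implicit Arguments. Unset Strict Implicit. Unset Printing Implicit Defensive.
Import Order.TTheory GRing.Theory Num.Theory.
Local Open Scope ring_scope.

Section Defs.
Variables (K : fieldType) (n : nat).

(* A = K^n with basis e_0..e_(n-1); vectors and covectors are given by their
   coordinates, 2-tensors in A (x) A by their components. *)
Definition vec := 'I_n -> K.
Definition tens := 'I_n -> 'I_n -> K.

Definition bvec (k : 'I_n) : vec := fun i => (i == k)%:R.

(* multiplication with structure constants: e_i e_j = \sum_k m i j k e_k *)
Definition mulA (m : 'I_n -> 'I_n -> 'I_n -> K) (a b : vec) : vec :=
  fun k => \sum_(i < n) \sum_(j < n) a i * b j * m i j k.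

Definition unital_assoc_algebra (m : 'I_n -> 'I_n -> 'I_n -> K) (u : vec) :=
  (forall a b c k, mulA m (mulA m a b) c k = mulA m a (mulA m b c) k) /\
  (forall a k, mulA m u a k = a k) /\ (forall a k, mulA m a u k = a k).

Definition comm_br (m : 'I_n -> 'I_n -> 'I_n -> K) (a b : vec) : vec :=
  fun k => mulA m a b k - mulA m b a k.

(* Quadratic bracket on linear coordinate functions x_0..x_(n-1):
     {x_i, x_j}(x) = \sum_(k,l) P i j k l x_k x_l,
   i.e. delta^dual(x_i /\ x_j) = \sum P i j k l x_k x_l in Sym^2(A^dual). *)
Definition pbr (P : 'I_n -> 'I_n -> 'I_n -> 'I_n -> K) (i j : 'I_n) (x : vec) : K :=
  \sum_(k < n) \sum_(l < n) P i j k l * x k * x l.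

(* partial derivative d/dx_a of the quadratic function pbr P i j *)
Definition dpbr (P : 'I_n -> 'I_n -> 'I_n -> 'I_n -> K) (i j a : 'I_n) (x : vec) : K :=
  \sum_(l < n) (P i j a l + P i j l a) * x l.

(* {x_i, f} = \sum_a {x_i, x_a} d f / d x_a  (Leibniz rule) *)
Definition quadratic_poisson (P : 'I_n -> 'I_n -> 'I_n -> 'I_n -> K) :=
  (* the coefficients represent an element of Sym^2(A^dual) *)
  (forall i j k l, P i j k l = P i j l k) /\
  (forall i j k l, P i j k l = - P j i k l) /\
  (* Jacobi identity on coordinate functions (equivalent to Jacobi on all
     functions, for a bivector field) *)
  (forall (i j k : 'I_n) (x : vec),
      \sum_(a < n) pbr P i a x * dpbr P j k a x
    + \sum_(a < n) pbr P j a x * dpbr P k i a x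
    + \sum_(a < n) pbr P k a x * dpbr P i j a x = 0).

(* The multiplication map A x A -> A is a Poisson map for the product Poisson
   structure: for coordinates (y, z) on A x A,
   {x_i o mult, x_j o mult}_{A x A}(y,z) = {x_i, x_j}(y z). *)
Definition mult_poisson_map (m : 'I_n -> 'I_n -> 'I_n -> K)
    (P : 'I_n -> 'I_n -> 'I_n -> 'I_n -> K) :=
  forall (i j : 'I_n) (y z : vec),
      \sum_(a < n) \sum_(b < n)
          pbr P a b y * mulA m (bvec a) z i * mulA m (bvec b) z j
    + \sum_(a < n) \sum_(b < n)
          pbr P a b z * mulA m y (bvec a) i * mulA m y (bvec b) j
    = pbr P i j (mulA m y z).

(* the dual map delta : Symm(A (x) A) -> A /\ A, on a symmetric tensor s,
   with component (i,j) the pairing of delta(s) with x_i /\ x_j *)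
Definition delta (P : 'I_n -> 'I_n -> 'I_n -> 'I_n -> K) (s : tens) : tens :=
  fun i j => \sum_(k < n) \sum_(l < n) P i j k l * s k l.

Definition symtens (x u : vec) : tens := fun k l => x k * u l + u k * x l.

Definition Delta_of (P : 'I_n -> 'I_n -> 'I_n -> 'I_n -> K) (u : vec) (x : vec) : tens :=
  delta P (symtens x u).

(* adjoint action of a on A (x) A : (ad_a (x) 1 + 1 (x) ad_a) *)
Definition ad_tens (br : vec -> vec -> vec) (a : vec) (t : tens) : tens :=
  fun p q => \sum_(i < n) t i q * br a (bvec i) p
           + \sum_(j < n) t p j * br a (bvec j) q.

(* dual bracket Delta^dual on L^dual (covectors given by coordinates):
   Delta^dual(xi /\ eta)(x) = <Delta(x), xi (x) eta> *)
Definition dual_br (D : vec -> tens) (xi eta : vec) : vec :=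
  fun k => \sum_(i < n) \sum_(j < n) xi i * eta j * D (bvec k) i j.

Definition lie_bialgebra (br : vec -> vec -> vec) (D : vec -> tens) :=
  (forall (c : K) (x y : vec) i j, D (fun k => c * x k + y k) i j = c * D x i j + D y i j) /\
  (* Delta takes values in L /\ L *)
  (forall x i j, D x i j = - D x j i) /\
  (forall a b i j, D (br a b) i j = ad_tens br a (D b) i j - ad_tens br b (D a) i j) /\
  (* Delta^dual is a Lie bracket: Jacobi identity (skew-symmetry and bilinearity
     follow from the above) *)
  (forall xi eta zeta k,
      dual_br D xi (dual_br D eta zeta) k + dual_br D eta (dual_br D zeta xi) k
    + dual_br D zeta (dual_br D xi eta) k = 0).

End Defs.

From Pilot Require Import Defs.
From HB Require Import structures.
From mathcomp Require Import all_boot all_order all_algebra.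
From mathcomp Require Import reals complex ring.
From Stdlib Require Import FunctionalExtensionality.
Set Implicit Arguments. Unset Strict Implicit. Unset Printing Implicit Defensive.
Import Order.TTheory GRing.Theory Num.Theory.
Local Open Scope ring_scope.

(* Write sdelta x y for delta (x (x) y + y (x) x): it is symmetric by
   construction, Delta x = sdelta x u, and the bracket of coordinate functions
   is {x_i, x_j}(x) = sdelta x x i j / 2.
   Compatibility of the bracket with the multiplication is a polynomial
   identity, quadratic in each of y and z, that holds on the diagonal; polarizing
   it at y = u + a, z = u + b and using that u is a unit gives the Leibniz-type
   rule
     Delta (a b) = (R_b (x) 1 + 1 (x) R_b) Delta a + (L_a (x) 1 + 1 (x) L_a) Delta b
                   - sdelta a b,
   whose antisymmetrization in a, b is the cocycle condition, sdelta being
   symmetric.  The same identity at y = z = u gives sdelta u u = 0.  The Jacobi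
   identity of the quadratic bracket is a cubic identity in x; its derivative at
   x = u in the direction e_b (where the term carrying sdelta u u vanishes) is
   the Jacobi identity for the structure constants Delta(e_b)_ij of Delta^*. *)

Section Coordinates.
Variables (K : fieldType) (n : nat).
Local Notation vec := (vec K n).
Local Notation tens := (tens K n).
Local Notation e := (bvec K).
(* Plain [mulA] would resolve to [FracField.mulA] from [fraction]. *)
Local Notation mulA := Pilot.Defs.mulA.
Implicit Types (c : K) (u v x y z : vec) (s t : tens).

Lemma sum_bvec_coord (F : 'I_n -> K) i : \sum_(k < n) F k * e i k = F i.
Proof.
rewrite (bigD1 i) //= big1 ?addr0; first by rewrite /bvec eqxx mulr1.
by move=> k ki; rewrite /bvec (negbTE ki) mulr0.
Qed.

Lemma sum_bvec_index (F : 'I_n -> K) j : \sum_(d < n) F d * e d j = F j.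
Proof.
rewrite -[RHS](sum_bvec_coord F j); apply: eq_bigr => d _.
by rewrite /bvec eq_sym.
Qed.

Lemma sum_lincomb_mull c (F G H : 'I_n -> K) :
  \sum_(a < n) (c * F a + G a) * H a =
  c * \sum_(a < n) F a * H a + \sum_(a < n) G a * H a.
Proof. by rewrite mulr_sumr -big_split; apply: eq_bigr => a _ /=; ring. Qed.

Lemma sum_lincomb_mulr c (F G H : 'I_n -> K) :
  \sum_(a < n) H a * (c * F a + G a) =
  c * \sum_(a < n) H a * F a + \sum_(a < n) H a * G a.
Proof. by rewrite mulr_sumr -big_split; apply: eq_bigr => a _ /=; ring. Qed.

Lemma sum2_lincomb c (F G : 'I_n -> 'I_n -> K) :
  \sum_(k < n) \sum_(l < n) (c * F k l + G k l) =
  c * \sum_(k < n) \sum_(l < n) F k l + \sum_(k < n) \sum_(l < n) G k l.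
Proof.
rewrite mulr_sumr -big_split; apply: eq_bigr => k _.
by rewrite mulr_sumr -big_split.
Qed.

Definition lincomb c x y : vec := fun k => c * x k + y k.
Definition lincombT c s t : tens := fun i j => c * s i j + t i j.

Lemma alternating_skew (F : vec -> vec -> K) :
  (forall c x x' y, F (lincomb c x x') y = c * F x y + F x' y) ->
  (forall c x y y', F x (lincomb c y y') = c * F x y + F x y') ->
  (forall x, F x x = 0) -> forall x y, F x y + F y x = 0.
Proof.
move=> lin1 lin2 F0 x y.
transitivity (F (lincomb 1 x y) (lincomb 1 x y) - F x x - F y y).
  by rewrite lin1 !lin2; ring.
by rewrite !F0 !subr0.
Qed.

Lemma cubic_polarization (two : 2 != 0 :> K) (G : vec -> vec -> vec -> K) :
  (forall c x x' y z, G (lincomb c x x') y z = c * G x y z + G x' y z) ->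
  (forall c x y y' z, G x (lincomb c y y') z = c * G x y z + G x y' z) ->
  (forall c x y z z', G x y (lincomb c z z') = c * G x y z + G x y z') ->
  (forall x, G x x x = 0) -> forall u v, G v u u + G u v u + G u u v = 0.
Proof.
move=> lin1 lin2 lin3 G0 u v; apply: (mulfI two); rewrite mulr0.
set xp := lincomb 1 v u; set xm := lincomb (-1) v u.
transitivity (G xp xp xp - G xm xm xm - 2 * G v v v).
  by rewrite !lin1 !lin2 !lin3; ring.
by rewrite !G0; ring.
Qed.

Lemma sum3_rotate (F : 'I_n -> 'I_n -> 'I_n -> K) :
  \sum_(i < n) \sum_(j < n) \sum_(k < n) F i j k
  = \sum_(k < n) \sum_(i < n) \sum_(j < n) F i j k.
Proof.
rewrite [RHS]exchange_big; apply: eq_bigr => i _.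
by rewrite [RHS]exchange_big.
Qed.

Lemma dual_br_nested (D : vec -> tens) (xi eta zeta : vec) k :
  dual_br D xi (dual_br D eta zeta) k =
  \sum_(i < n) \sum_(j < n) \sum_(l < n)
    xi i * eta j * zeta l * \sum_(a < n) D (e k) i a * D (e a) j l.
Proof.
rewrite /dual_br; apply: eq_bigr => i _.
transitivity (\sum_(a < n) \sum_(j < n) \sum_(l < n)
                xi i * (eta j * zeta l * D (e a) j l) * D (e k) i a).
  apply: eq_bigr => a _; rewrite mulr_sumr mulr_suml; apply: eq_bigr => j _.
  by rewrite mulr_sumr mulr_suml.
rewrite exchange_big; apply: eq_bigr => j _; rewrite exchange_big; apply: eq_bigr => l _.
by rewrite mulr_sumr; apply: eq_bigr => a _; ring.
Qed.

Lemma dual_br_jacobi (D : vec -> tens) :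
  (forall (b i j k : 'I_n),
      \sum_(a < n) D (e b) i a * D (e a) j k + \sum_(a < n) D (e b) j a * D (e a) k i
    + \sum_(a < n) D (e b) k a * D (e a) i j = 0) ->
  forall xi eta zeta k,
      dual_br D xi (dual_br D eta zeta) k + dual_br D eta (dual_br D zeta xi) k
    + dual_br D zeta (dual_br D xi eta) k = 0.
Proof.
move=> jacD xi eta zeta k; rewrite !dual_br_nested.
rewrite [X in _ + X + _]sum3_rotate [X in _ + X]sum3_rotate [X in _ + X]sum3_rotate.
rewrite -!big_split; apply: big1 => i _; rewrite -!big_split; apply: big1 => j _.
rewrite -!big_split; apply: big1 => l _ /=.
by rewrite -[RHS](mulr0 (xi i * eta j * zeta l)) -[in RHS](jacD k i j l); ring.
Qed.

Variable P : 'I_n -> 'I_n -> 'I_n -> 'I_n -> K.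

Definition sdelta x y : tens := delta P (symtens x y).

Lemma sdeltaC x y : sdelta x y = sdelta y x.
Proof.
rewrite /sdelta (_ : symtens x y = symtens y x) //.
by do 2 apply: functional_extensionality => ?; rewrite /symtens addrC.
Qed.

Lemma sdelta_lincomb_l c x x' y :
  sdelta (lincomb c x x') y = lincombT c (sdelta x y) (sdelta x' y).
Proof.
apply: functional_extensionality => i; apply: functional_extensionality => j.
rewrite /lincombT /sdelta /delta -sum2_lincomb.
by do 2 apply: eq_bigr => ? _; rewrite /symtens /lincomb; ring.
Qed.

Lemma sdelta_lincomb_r c x y y' :
  sdelta x (lincomb c y y') = lincombT c (sdelta x y) (sdelta x y').
Proof. by rewrite !(sdeltaC x) sdelta_lincomb_l. Qed.

Lemma sdelta_diag x : sdelta x x = fun i j => 2 * pbr P i j x.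
Proof.
apply: functional_extensionality => i; apply: functional_extensionality => j.
rewrite /sdelta /delta /pbr mulr_sumr; apply: eq_bigr => k _.
by rewrite mulr_sumr; apply: eq_bigr => l _; rewrite /symtens; ring.
Qed.

Lemma dpbr_sdelta i j (a : 'I_n) x : dpbr P i j a x = sdelta (e a) x i j.
Proof.
rewrite /sdelta /delta /symtens /dpbr.
transitivity (\sum_k (\sum_l P i j k l * x l) * e a k + \sum_k P i j k a * x k).
  by rewrite sum_bvec_coord -big_split; apply: eq_bigr => l _ /=; ring.
rewrite -big_split; apply: eq_bigr => k _ /=.
under [RHS]eq_bigr do rewrite mulrDr.
rewrite big_split /= mulr_suml; congr (_ + _); first by apply: eq_bigr => l _; ring.
by under eq_bigr do rewrite mulrA; rewrite sum_bvec_coord.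
Qed.

Hypothesis skewP : forall i j k l, P i j k l = - P j i k l.

Lemma delta_skew s i j : delta P s i j = - delta P s j i.
Proof.
rewrite /delta -sumrN; apply: eq_bigr => k _; rewrite -sumrN; apply: eq_bigr => l _.
by rewrite skewP mulNr.
Qed.

Definition pbr_grad x (a : 'I_n) : tens := sdelta (e a) x.

Lemma pbr_gradE x : pbr_grad x = fun a i j => dpbr P i j a x.
Proof.
apply: functional_extensionality => a; apply: functional_extensionality => i.
by apply: functional_extensionality => j; rewrite dpbr_sdelta.
Qed.

Lemma pbr_grad_lincomb c x x' :
  pbr_grad (lincomb c x x') = fun a => lincombT c (pbr_grad x a) (pbr_grad x' a).
Proof. by apply: functional_extensionality => a; rewrite /pbr_grad sdelta_lincomb_r. Qed.

Definition jacobiator x1 x2 x3 (i j k : 'I_n) : K :=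
  \sum_(a < n) sdelta x1 x2 i a * pbr_grad x3 a j k
  + \sum_(a < n) sdelta x1 x2 j a * pbr_grad x3 a k i
  + \sum_(a < n) sdelta x1 x2 k a * pbr_grad x3 a i j.

Lemma jacobiatorC x1 x2 x3 i j k : jacobiator x1 x2 x3 i j k = jacobiator x2 x1 x3 i j k.
Proof. by rewrite /jacobiator sdeltaC. Qed.

Lemma jacobiator_lincomb1 c x x' y z i j k :
  jacobiator (lincomb c x x') y z i j k = c * jacobiator x y z i j k + jacobiator x' y z i j k.
Proof. by rewrite /jacobiator sdelta_lincomb_l /lincombT !sum_lincomb_mull; ring. Qed.

Lemma jacobiator_lincomb2 c x y y' z i j k :
  jacobiator x (lincomb c y y') z i j k = c * jacobiator x y z i j k + jacobiator x y' z i j k.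
Proof. by rewrite !(jacobiatorC x) jacobiator_lincomb1. Qed.

Lemma jacobiator_lincomb3 c x y z z' i j k :
  jacobiator x y (lincomb c z z') i j k = c * jacobiator x y z i j k + jacobiator x y z' i j k.
Proof. by rewrite /jacobiator pbr_grad_lincomb /lincombT !sum_lincomb_mulr; ring. Qed.

Hypothesis jacobiP : forall (i j k : 'I_n) (x : vec),
    \sum_(a < n) pbr P i a x * dpbr P j k a x
  + \sum_(a < n) pbr P j a x * dpbr P k i a x
  + \sum_(a < n) pbr P k a x * dpbr P i j a x = 0.

Lemma jacobiator_diag x i j k : jacobiator x x x i j k = 0.
Proof.
rewrite /jacobiator pbr_gradE sdelta_diag -[RHS](mulr0 2) -[in RHS](jacobiP i j k x) /=.
by rewrite !mulrDr !mulr_sumr; congr (_ + _ + _); apply: eq_bigr => a _; rewrite mulrA.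
Qed.

Variable m : 'I_n -> 'I_n -> 'I_n -> K.

Definition rmul y x : vec := mulA m x y.

Lemma mulA_lincomb_l c x x' :
  mulA m (lincomb c x x') = fun y => lincomb c (mulA m x y) (mulA m x' y).
Proof.
apply: functional_extensionality => y; apply: functional_extensionality => k.
by rewrite /mulA /lincomb -sum2_lincomb; do 2 apply: eq_bigr => ? _; ring.
Qed.

Lemma mulA_lincomb_r c x y y' :
  mulA m x (lincomb c y y') = lincomb c (mulA m x y) (mulA m x y').
Proof.
apply: functional_extensionality => k.
by rewrite /mulA /lincomb -sum2_lincomb; do 2 apply: eq_bigr => ? _; ring.
Qed.

Lemma rmul_lincomb c y y' :
  rmul (lincomb c y y') = fun x => lincomb c (rmul y x) (rmul y' x).
Proof. by apply: functional_extensionality => x; rewrite /rmul mulA_lincomb_r. Qed.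

Definition map_tens (f g : vec -> vec) t : tens :=
  fun i j => \sum_(a < n) \sum_(b < n) t a b * f (e a) i * g (e b) j.

Lemma map_tens_lincombT f g c s t i j :
  map_tens f g (lincombT c s t) i j = c * map_tens f g s i j + map_tens f g t i j.
Proof. by rewrite /map_tens /lincombT -sum2_lincomb; do 2 apply: eq_bigr => ? _; ring. Qed.

Lemma map_tens_lincomb_l (f f' g : vec -> vec) c t i j :
  map_tens (fun x => lincomb c (f x) (f' x)) g t i j
  = c * map_tens f g t i j + map_tens f' g t i j.
Proof. by rewrite /map_tens /lincomb -sum2_lincomb; do 2 apply: eq_bigr => ? _; ring. Qed.

Lemma map_tens_lincomb_r (f g g' : vec -> vec) c t i j :
  map_tens f (fun x => lincomb c (g x) (g' x)) t i j
  = c * map_tens f g t i j + map_tens f g' t i j.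
Proof. by rewrite /map_tens /lincomb -sum2_lincomb; do 2 apply: eq_bigr => ? _; ring. Qed.

Lemma map_tensZ f g c t i j :
  map_tens f g (fun a b => c * t a b) i j = c * map_tens f g t i j.
Proof.
rewrite /map_tens mulr_sumr; apply: eq_bigr => a _.
by rewrite mulr_sumr; apply: eq_bigr => b _; ring.
Qed.

Lemma map_tens_id_r f t i j :
  map_tens f (fun x => x) t i j = \sum_(a < n) t a j * f (e a) i.
Proof.
apply: eq_bigr => a _; rewrite -[RHS](sum_bvec_index (fun b => t a b * f (e a) i)).
by apply: eq_bigr => b _.
Qed.

Lemma map_tens_id_l g t i j :
  map_tens (fun x => x) g t i j = \sum_(b < n) t i b * g (e b) j.
Proof.
rewrite /map_tens exchange_big; apply: eq_bigr => b _ /=.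
rewrite -[RHS](sum_bvec_index (fun a => t a b * g (e b) j)).
by apply: eq_bigr => a _; ring.
Qed.

Lemma map_tens_id t i j : map_tens (fun x => x) (fun x => x) t i j = t i j.
Proof. by rewrite map_tens_id_r sum_bvec_index. Qed.

(* On the diagonal y1 = y2, z1 = z2 this is twice the difference of the two sides
   of [mult_poisson_map]. *)
Definition poisson_defect y1 y2 z1 z2 : tens := fun i j =>
  map_tens (rmul z1) (rmul z2) (sdelta y1 y2) i j
  + map_tens (mulA m y1) (mulA m y2) (sdelta z1 z2) i j
  - sdelta (mulA m y1 z1) (mulA m y2 z2) i j.

Local Ltac expand_lincomb :=
  rewrite /poisson_defect ?mulA_lincomb_l ?mulA_lincomb_r ?rmul_lincomb;
  rewrite ?sdelta_lincomb_l ?sdelta_lincomb_r;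
  rewrite ?map_tens_lincombT ?map_tens_lincomb_l ?map_tens_lincomb_r /lincombT; ring.

Lemma poisson_defect_lincomb1 c y y' y2 z1 z2 i j :
  poisson_defect (lincomb c y y') y2 z1 z2 i j
  = c * poisson_defect y y2 z1 z2 i j + poisson_defect y' y2 z1 z2 i j.
Proof. expand_lincomb. Qed.

Lemma poisson_defect_lincomb2 c y y' y1 z1 z2 i j :
  poisson_defect y1 (lincomb c y y') z1 z2 i j
  = c * poisson_defect y1 y z1 z2 i j + poisson_defect y1 y' z1 z2 i j.
Proof. expand_lincomb. Qed.

Lemma poisson_defect_lincomb3 c z z' y1 y2 z2 i j :
  poisson_defect y1 y2 (lincomb c z z') z2 i j
  = c * poisson_defect y1 y2 z z2 i j + poisson_defect y1 y2 z' z2 i j.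
Proof. expand_lincomb. Qed.

Lemma poisson_defect_lincomb4 c z z' y1 y2 z1 i j :
  poisson_defect y1 y2 z1 (lincomb c z z') i j
  = c * poisson_defect y1 y2 z1 z i j + poisson_defect y1 y2 z1 z' i j.
Proof. expand_lincomb. Qed.

Hypothesis multP : mult_poisson_map m P.

Lemma poisson_defect_diag y z i j : poisson_defect y y z z i j = 0.
Proof.
rewrite /poisson_defect !sdelta_diag !map_tensZ -(multP i j y z).
by rewrite -mulrDr subrr.
Qed.

Lemma poisson_defect_polar (a b : vec) u i j :
  poisson_defect a u b u i j + poisson_defect u a b u i j
  + poisson_defect a u u b i j + poisson_defect u a u b i j = 0.
Proof.
have skew_y z : poisson_defect a u z z i j + poisson_defect u a z z i j = 0.
  apply: (alternating_skew (F := fun y1 y2 => poisson_defect y1 y2 z z i j)).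
  - by move=> *; apply: poisson_defect_lincomb1.
  - by move=> *; apply: poisson_defect_lincomb2.
  - by move=> y; apply: poisson_defect_diag.
rewrite -addrA.
apply: (alternating_skew
  (F := fun z1 z2 => poisson_defect a u z1 z2 i j + poisson_defect u a z1 z2 i j)).
- by move=> *; rewrite !poisson_defect_lincomb3; ring.
- by move=> *; rewrite !poisson_defect_lincomb4; ring.
- exact: skew_y.
Qed.

(* f (x) 1 + 1 (x) f on 2-tensors; [ad_tens br a] is [der_tens (br a)]. *)
Definition der_tens (f : vec -> vec) t : tens := fun p q =>
  \sum_(a < n) t a q * f (e a) p + \sum_(b < n) t p b * f (e b) q.

Lemma ad_tens_comm_br (a : vec) t p q :
  ad_tens (comm_br m) a t p q = der_tens (mulA m a) t p q - der_tens (rmul a) t p q.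
Proof.
rewrite /ad_tens /der_tens /comm_br /rmul.
under [X in X + _ = _]eq_bigr do rewrite mulrBr.
under [X in _ + X = _]eq_bigr do rewrite mulrBr.
by rewrite !sumrB; ring.
Qed.

Variable u : vec.
Hypotheses (unit_l : forall x k, mulA m u x k = x k)
           (unit_r : forall x k, mulA m x u k = x k).
Hypothesis two : 2 != 0 :> K.

Lemma mulA_unit_l : mulA m u = fun x => x.
Proof.
by apply: functional_extensionality => x; apply: functional_extensionality; apply: unit_l.
Qed.

Lemma mulA_unit_r x : mulA m x u = x.
Proof. by apply: functional_extensionality; apply: unit_r. Qed.

Lemma rmul_unit : rmul u = fun x => x.
Proof. by apply: functional_extensionality => x; apply: mulA_unit_r. Qed.

Lemma sdelta_unit i j : sdelta u u i j = 0.
Proof.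
move: (poisson_defect_diag u u i j).
by rewrite /poisson_defect rmul_unit mulA_unit_l !map_tens_id addrK.
Qed.

Lemma sdelta_mulA (a b : vec) p q :
  sdelta (mulA m a b) u p q =
  der_tens (rmul b) (sdelta a u) p q + der_tens (mulA m a) (sdelta b u) p q - sdelta a b p q.
Proof.
have := poisson_defect_polar a b u p q.
rewrite /poisson_defect rmul_unit mulA_unit_l !mulA_unit_r !map_tens_id_r !map_tens_id_l.
rewrite !(sdeltaC u) (sdeltaC b a) /der_tens => polar.
(* the four polarized terms add up to twice the difference of the two sides *)
apply: (mulfI two); apply/subr0_eq/oppr_inj; rewrite oppr0 -[RHS]polar; ring.
Qed.

Lemma sdelta_comm_br (a b : vec) p q :
  sdelta (comm_br m a b) u p q
  = ad_tens (comm_br m) a (sdelta b u) p q - ad_tens (comm_br m) b (sdelta a u) p q.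
Proof.
have -> : comm_br m a b = lincomb (-1) (mulA m b a) (mulA m a b).
  by apply: functional_extensionality => k; rewrite /comm_br /lincomb; ring.
rewrite sdelta_lincomb_l /lincombT !ad_tens_comm_br !sdelta_mulA (sdeltaC b a).
ring.
Qed.

Lemma jacobiator_bvec_unit (b : 'I_n) i j k : jacobiator (e b) u u i j k = 0.
Proof.
have Juu v : jacobiator u u v i j k = 0.
  by rewrite /jacobiator !big1 ?addr0 // => a _; rewrite sdelta_unit mul0r.
have : jacobiator (e b) u u i j k + jacobiator u (e b) u i j k
       + jacobiator u u (e b) i j k = 0.
  apply: (cubic_polarization two (G := fun x y z => jacobiator x y z i j k)).
  - by move=> *; apply: jacobiator_lincomb1.
  - by move=> *; apply: jacobiator_lincomb2.
  - by move=> *; apply: jacobiator_lincomb3.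
  - by move=> x; apply: jacobiator_diag.
rewrite (jacobiatorC u) Juu addr0 => E.
by apply: (mulfI two); rewrite mulr0 -[RHS]E; ring.
Qed.

Theorem poisson_lie_bialgebra : lie_bialgebra (comm_br m) (Delta_of P u).
Proof.
split; [|split; [|split]].
- move=> c x y i j; exact: (congr1 (fun t => t i j) (sdelta_lincomb_l c x y u)).
- by move=> x i j; apply: delta_skew.
- exact: sdelta_comm_br.
- by apply: dual_br_jacobi => b i j k; apply: jacobiator_bvec_unit.
Qed.

End Coordinates.

Theorem lemma3 (R : realType) (K : fieldType)
  (hK : K = R :> fieldType \/ K = R[i] :> fieldType)
  (n : nat) (m : 'I_n -> 'I_n -> 'I_n -> K) (u : vec K n)
  (P : 'I_n -> 'I_n -> 'I_n -> 'I_n -> K) :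
  unital_assoc_algebra m u ->
  quadratic_poisson P ->
  mult_poisson_map m P ->
  lie_bialgebra (comm_br m) (Delta_of P u).
Proof.
move=> [_ [unit_l unit_r]] [_ [skewP jacobiP]] multP.
have two : 2 != 0 :> K by case: hK => ->; rewrite pnatr_eq0.
exact: poisson_lie_bialgebra.
Qed.
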